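(* Let $d\ge3$, $\{\mathbb{P}^u\}$ satisfy (P1), (P2), (D), (S1), (S2), fix $u$, and let $A\subseteq \mathbb{R}^d$ be compact and $(b_N)$ positive reals. Let $\omega\in\Omega^{1/3,1/9}_{\mathrm{reg}}$. There exists a constant $c_4(\omega)$ and for each $\chi\in(0,1)$ a constant $c_5(\chi)>0$ such that: for integers $N\ge1$, $\ell_*\ge0$, $U_0\in\mathcal U^\omega_{\ell_*,N}$, $\epsilon\in\mathbb{N}$, $\chi\in(0,1)$, $\Sigma\in\mathcal S^\omega_{U_0,\epsilon,\chi}$, if $\ell\ge c_4(\omega)$ with $\epsilon\le\frac14 2^\ell$, $x_0\in\mathcal S_\infty\cap B(0,r_{1/3,4\cdot2^\ell})$ with $\widetilde\sigma^\omega_\ell(x_0)\in[\widetilde\alpha,1-\widetilde\alpha]$, and $y\in\mathcal S_\infty$ with $|y-x_0|\le\frac14 2^\ell$, then $$P^\omega_y[H_\Sigma<T_{B(x_0,5\cdot2^\ell)}]\ge c_5(\chi).$$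
   Context: Framework: $\Omega=\{0,1\}^{\mathbb{Z}^d}$, $\mathcal S=\{x:\omega(x)=1\}$, $\mathcal S_\infty$ vertices of infinite nearest-neighbour components, $B(x,r)$ closed $\ell^\infty$-ball in $\mathbb{Z}^d$, $|\cdot|$ Euclidean norm; assumptions (P1) ergodicity, (P2) monotonicity, (D) sprinkled decoupling, (S1) local uniqueness with rate $\ge(\log R)^{1+\Delta_S(u)}$, (S2) $\eta=\eta(u)=\mathbb{P}^u[0\in\mathcal S_\infty]>0$ continuous. $P^\omega_x$: continuous-time constant-speed simple random walk on $\mathcal S_\infty$; $H_U=\inf\{t\ge0:X_t\in U\}$, $T_U=\inf\{t\ge0:X_t\notin U\}$, $\tau_r=\inf\{t\ge0:|X_t-X_0|_\infty\ge r\}$. $r_{\alpha,R}=\exp(\kappa_{\mathrm{reg}}(\alpha)(\log R)^{1+\Delta_S})$ with $\kappa_{\mathrm{reg}}(\alpha)=\frac1{2d}(\kappa_{d2}(\alpha)\wedge c_{hk6})$. $\Omega^{\alpha,\vartheta}_{\mathrm{reg}}$: configurations with $\mathcal S_\infty$ nonempty connected and finite minimal scales $R_{\mathrm{den}}(\omega,\alpha)$ (volume regularity $(1-\alpha)\eta\le|\mathcal S_\infty\cap B(x,R)|/|B(x,R)|\le(1+\alpha)\eta$ for all $R\ge R_{\mathrm{den}}$, $x\in\mathcal S_\infty\cap B(0,r_{\alpha,R})$), $R_{\mathrm{hk}}(\omega,\alpha)$ (two-sided Gaussian heat kernel bound for all $R\ge R_{\mathrm{hk}}$, $x\in\mathcal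 S_\infty\cap B(0,2r_{\alpha,R})$, $y\in\mathcal S_\infty$, $t\ge R\vee|x-y|_1^{3/2}$), and $R_{\mathrm{khk}}(\omega,\alpha,\vartheta)$ (for integers $R\ge R_{\mathrm{khk}}$, $P^\omega_x[X_t=y,T_{B(x_0,R)\cap\mathcal S_\infty}>t]/\mu_y\ge c_{khk1}(\vartheta)t^{-d/2}$ for $x_0\in\mathcal S_\infty\cap B(0,r_{\alpha,R})$, $x,y\in\mathcal S_\infty\cap B(x_0,(1-\vartheta)R)$, $c_{khk2}(\vartheta)R^2\le t\le R^2$, $\mu_y$ degree in $\mathcal S_\infty$). Sets: $A_N=(NA)\cap\mathbb{Z}^d$; $U_1=\mathcal S_\infty\setminus U_0$; $S$ = points of $U_1$ adjacent to $U_0$; $\sigma^\omega_\ell(x)=\frac{|B(x,2^\ell)\cap U_1|}{|B(x,2^\ell)\cap\mathcal S_\infty|}$, $\widetilde\sigma^\omega_\ell(x)=\frac{|B(x,4\cdot2^\ell)\cap U_1|}{|B(x,4\cdot2^\ell)\cap\mathcal S_\infty|}$; $\widetilde\alpha=\frac3{10}4^{-d}$; $\mathcal U^\omega_{\ell_*,N}$: $U_0\subseteq B(0,b_N)\cap\mathcal S_\infty$ with $\sigma^\omega_\ell(x)\le\frac12$ for all $x\in A_N\cap\mathcal S_\infty$, $\ell\le\ell_*$; $\mathcal S^\omega_{U_0,\epsilon,\chi}$: bounded $\Sigma\subseteq\mathcal S_\infty$ with $P^\omega_x[H_\Sigma<\tau_\epsilon]\ge\chi$ for all $x\in S$. *)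

From HB Require Import structures.
From mathcomp Require Import all_boot all_order all_algebra.
From mathcomp Require Import all_classical all_reals all_analysis.
From mathcomp Require Import finmap.
Set Implicit Arguments. Unset Strict Implicit. Unset Printing Implicit Defensive.
Import Order.TTheory GRing.Theory Num.Theory.
Import numFieldNormedType.Exports.
Local Open Scope classical_set_scope.
Local Open Scope ring_scope.

Definition pt (d : nat) := 'rV[int]_d.
Definition config (d : nat) := pt d -> bool.

Section Defs.
Context {R : realType}.
Context {d : nat}.
Implicit Types (x y z : pt d) (om : config d).

Definition emb x : 'rV[R]_d := map_mx (fun k : int => k%:~R) x.

Definition linf (v : pt d) : R := \big[Num.max/0]_(i < d) (`|v ord0 i|)%:~R.
Definition l1 (v : pt d) : R := \sum_(i < d) (`|v ord0 i|)%:~R.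
Definition l2 (v : pt d) : R := Num.sqrt (\sum_(i < d) ((v ord0 i) ^+ 2)%:~R).

Definition ball_inf x (r : R) : set (pt d) := [set z | linf (z - x) <= r].

Definition nbrs x : seq (pt d) :=
  [seq x + s *: delta_mx ord0 i | i <- enum 'I_d, s <- [:: 1%R; (-1)%R]].
Definition adj : rel (pt d) := fun x y => y \in nbrs x.

Definition card (A : set (pt d)) : R := ((#|` fset_set A |)%fset)%:R.

(** S = open sites; connectivity inside S; infinite cluster S_infty *)
Definition conn om x y : Prop :=
  exists p : seq (pt d), [/\ path adj x p, all om (x :: p) & last x p = y].
Definition Sinf om : set (pt d) :=
  [set x | om x /\ ~ finite_set [set y | conn om x y]].

(** degree mu_x in S_infty, and one step of the (jump chain of the) constant-speed walk *)
Definition deg om x : R := (count (fun z => `[< Sinf om z >]) (nbrs x))%:R.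
Definition avg om (f : pt d -> R) x : R :=
  (\sum_(z <- nbrs x | `[< Sinf om z >]) f z) / deg om x.

(** hitn om U Sig n x = P_x[ exists k <= n, X_k in Sig and X_j in U for all j <= k ]
    for the jump chain started at x. *)
Fixpoint hitn om (U Sig : set (pt d)) (n : nat) (x : pt d) : R :=
  match n with
  | 0 => if `[< U x /\ Sig x >] then 1 else 0
  | n'.+1 => if `[< U x >] then (if `[< Sig x >] then 1 else avg om (hitn om U Sig n') x)
             else 0
  end.
(** P_x[ H_Sig < T_U ] *)
Definition hitprob om (U Sig : set (pt d)) x : R :=
  sup [set hitn om U Sig n x | n in [set: nat]].

(** killn om U n x y = P_x[ X_n = y, X_j in U for all j <= n ] (jump chain) *)
Fixpoint killn om (U : set (pt d)) (n : nat) (x y : pt d) : R :=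
  match n with
  | 0 => if `[< U x /\ x = y >] then 1 else 0
  | n'.+1 => if `[< U x >] then avg om (fun z => killn om U n' z y) x else 0
  end.
(** continuous-time constant-speed walk: P_x[ X_t = y, T_U > t ] (Poissonisation) *)
Definition qkill om (U : set (pt d)) (t : R) x y : R :=
  limn (series (fun n => expR (- t) * t ^+ n / (n`!)%:R * killn om U n x y)).
Definition qt om (t : R) x y : R := qkill om [set: pt d] t x y.

Definition rscale (kreg DeltaS : R) (Rr : R) : R :=
  expR (kreg * powR (ln Rr) (1 + DeltaS)).

Definition origin : pt d := 0.

(** Omega_reg^{alpha,theta}, with the paper's constants passed as parameters:
    eta = eta(u), kreg = kappa_reg(alpha), chk1..chk4 heat-kernel constants,
    ckhk1 = c_khk1(theta), ckhk2 = c_khk2(theta). *)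
Definition Omega_reg (eta DeltaS kreg chk1 chk2 chk3 chk4 ckhk1 ckhk2 alpha theta : R)
    om : Prop :=
  let r := rscale kreg DeltaS in
  [/\ Sinf om !=set0,
      (forall x y, Sinf om x -> Sinf om y -> conn om x y),
      (exists R0 : R, forall Rr : R, R0 <= Rr -> forall x,
          Sinf om x -> ball_inf origin (r Rr) x ->
          (1 - alpha) * eta <= card (Sinf om `&` ball_inf x Rr) / card (ball_inf x Rr)
          <= (1 + alpha) * eta),
      (exists R0 : R, forall Rr : R, R0 <= Rr -> forall x y (t : R),
          Sinf om x -> ball_inf origin (2 * r Rr) x -> Sinf om y ->
          Num.max Rr (powR (l1 (x - y)) (3 / 2)) <= t ->
          chk1 * powR t (- (d%:R / 2)) * expR (- chk2 * (l1 (x - y)) ^+ 2 / t)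
            <= qt om t x y / deg om y
          <= chk3 * powR t (- (d%:R / 2)) * expR (- chk4 * (l1 (x - y)) ^+ 2 / t))
    &
      (exists R0 : nat, forall Rn : nat, (R0 <= Rn)%N -> forall x0 x y (t : R),
          Sinf om x0 -> ball_inf origin (r Rn%:R) x0 ->
          Sinf om x -> ball_inf x0 ((1 - theta) * Rn%:R) x ->
          Sinf om y -> ball_inf x0 ((1 - theta) * Rn%:R) y ->
          ckhk2 * (Rn%:R) ^+ 2 <= t <= (Rn%:R) ^+ 2 ->
          qkill om (ball_inf x0 Rn%:R `&` Sinf om) t x y / deg om y
            >= ckhk1 * powR t (- (d%:R / 2)))].

Definition AN (A : set 'rV[R]_d) (N : nat) : set (pt d) :=
  [set x | exists2 a, A a & emb x = N%:R *: a].

Definition U1 om (U0 : set (pt d)) : set (pt d) := Sinf om `\` U0.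
Definition bdry om (U0 : set (pt d)) : set (pt d) :=
  [set x | U1 om U0 x /\ exists2 z, U0 z & adj x z].
Definition sigma om (U0 : set (pt d)) (l : nat) x : R :=
  card (ball_inf x (2 ^+ l) `&` U1 om U0) / card (ball_inf x (2 ^+ l) `&` Sinf om).
Definition sigmat om (U0 : set (pt d)) (l : nat) x : R :=
  card (ball_inf x (4 * 2 ^+ l) `&` U1 om U0) / card (ball_inf x (4 * 2 ^+ l) `&` Sinf om).
Definition alphat : R := (3 / 10) * (4 ^+ d)^-1.

Definition UclassN om (A : set 'rV[R]_d) (b : nat -> R) (lstar N : nat)
    (U0 : set (pt d)) : Prop :=
  U0 `<=` ball_inf origin (b N) `&` Sinf om /\
  forall x l, AN A N x -> Sinf om x -> (l <= lstar)%N -> sigma om U0 l x <= 1 / 2.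

(** the class S^omega_{U0,eps,chi}; tau_eps for the walk from x is the exit time of
    {z : |z - x|_infty < eps} *)
Definition Sclass om (U0 : set (pt d)) (eps : nat) (chi : R) (Sig : set (pt d)) : Prop :=
  [/\ (exists r : R, Sig `<=` ball_inf origin r),
      Sig `<=` Sinf om
    & forall x, bdry om U0 x ->
        chi <= hitprob om [set z | linf (z - x) < eps%:R] Sig x].

End Defs.

From Pilot Require Import Defs.
From HB Require Import structures.
From mathcomp Require Import all_boot all_order all_algebra.
From mathcomp Require Import all_classical all_reals all_analysis.
From mathcomp Require Import finmap zify ring lra.
Import Order.TTheory GRing.Theory Num.Theory.
Import numFieldNormedType.Exports.
Local Open Scope classical_set_scope.
Local Open Scope ring_scope.

(* Write 2^l = 2L. Since the density of U1 in B(x0, 8L) /\ S_inf lies in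
   [alphat, 1 - alphat] and S_inf fills at least a fraction (2/3) eta of that
   ball, at least alphat (2/3) eta (8L)^d of its points lie on the side of the
   interface opposite to y (in U1 if y is in U0, in U0 otherwise). By the
   killed heat-kernel lower bound at scale Rn = 9L, the walk from y killed on
   leaving B(x0, Rn) sits at each of them at time Rn^2 with probability at
   least c_khk1 Rn^-d, so it crosses the interface, i.e. visits S inside
   B(x0, Rn), with probability at least alphat (2/3) eta c_khk1 (8/9)^d. From
   such a point it hits Sigma before moving eps <= L/2 away, hence inside
   B(x0, 10L), with probability at least chi, and the strong Markov property
   combines the two bounds. All walk estimates are proved for the jump chain;
   the continuous-time killed kernel is its Poisson mixture. *)

Section Walk.
Context {R : realType} {d : nat} (om : config d).
Implicit Types (x y z w : pt d) (U B Sig : set (pt d)) (f g : pt d -> R).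

Lemma deg_ge0 x : 0 <= deg om x :> R.
Proof. exact: ler0n. Qed.

Lemma avg_ge0 f x : (forall z, Sinf om z -> 0 <= f z) -> 0 <= avg om f x.
Proof.
move=> f_ge0; rewrite /avg divr_ge0 ?deg_ge0 //.
by apply: sumr_ge0 => z /asboolP; exact: f_ge0.
Qed.

Lemma ler_avg f g x : (forall z, z \in nbrs x -> Sinf om z -> f z <= g z) ->
  avg om f x <= avg om g x.
Proof.
move=> le_fg; rewrite /avg ler_wpM2r ?invr_ge0 ?deg_ge0 //.
rewrite big_seq_cond [leRHS]big_seq_cond.
by apply: ler_sum => z /andP[zx /asboolP]; exact: le_fg.
Qed.

Lemma avg_le1 f x : (forall z, Sinf om z -> f z <= 1) -> avg om f x <= 1.
Proof.
move=> f_le1; rewrite /avg; have [->|deg_neq0] := eqVneq (deg om x : R) 0.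
  by rewrite invr0 mulr0.
have deg_gt0 : 0 < (deg om x : R) by rewrite lt_def deg_neq0 deg_ge0.
rewrite ler_pdivrMr // mul1r /deg -sum1_count natr_sum.
by apply: ler_sum => z /asboolP; exact: f_le1.
Qed.

Lemma avgZ (c : R) f x : avg om (fun z => c * f z) x = c * avg om f x.
Proof. by rewrite /avg -mulr_sumr mulrA. Qed.

Lemma avg_sum (s : seq (pt d)) (F : pt d -> pt d -> R) x :
  avg om (fun z => \sum_(w <- s) F w z) x = \sum_(w <- s) avg om (F w) x.
Proof. by rewrite /avg exchange_big /= mulr_suml. Qed.

Lemma hitn_ge0 U Sig n x : 0 <= hitn om U Sig n x :> R.
Proof.
elim: n x => [|n IH] x /=; first by case: asboolP.
by case: asboolP => // _; case: asboolP => // _; exact: avg_ge0.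
Qed.

Lemma hitn_le1 U Sig n x : hitn om U Sig n x <= 1 :> R.
Proof.
elim: n x => [|n IH] x /=; first by case: asboolP.
by case: asboolP => // _; case: asboolP => // _; exact: avg_le1.
Qed.

Lemma hitn_target U Sig n x : U x -> Sig x -> hitn om U Sig n x = 1 :> R.
Proof.
case: n => [|n] /= Ux Sx; first by rewrite asboolT.
by rewrite (asboolT Ux) (asboolT Sx).
Qed.

Lemma hitn_leS U Sig n x : hitn om U Sig n x <= hitn om U Sig n.+1 x :> R.
Proof.
elim: n x => [|n IH] x.
  rewrite [leLHS]/=; case: asboolP => [[Ux Sx]|_]; last exact: hitn_ge0.
  by rewrite hitn_target.
rewrite /=; case: asboolP => // _; case: asboolP => // _.
by apply: ler_avg => z _ _; exact: IH.
Qed.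

Lemma le_hitn U Sig n m x : (n <= m)%N -> hitn om U Sig n x <= hitn om U Sig m x :> R.
Proof.
move=> /subnK <-; elim: (m - n)%N => [|k IH] //.
by rewrite addSn; exact: le_trans IH (hitn_leS _ _ _ _).
Qed.

Lemma le_hitnU U U' Sig n x : U `<=` U' ->
  hitn om U Sig n x <= hitn om U' Sig n x :> R.
Proof.
move=> sUU'; elim: n x => [|n IH] x.
  rewrite [leLHS]/=; case: asboolP => [[Ux Sx]|_]; last exact: hitn_ge0.
  by rewrite hitn_target //; exact: sUU'.
rewrite [leLHS]/=; case: asboolP => [Ux|_]; last exact: hitn_ge0.
rewrite /= (asboolT (sUU' _ Ux)); case: asboolP => // _.
by apply: ler_avg => z _ _; exact: IH.
Qed.

Lemma killn_ge0 U n x y : 0 <= killn om U n x y :> R.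
Proof.
elim: n x => [|n IH] x /=; first by case: asboolP.
by case: asboolP => // _; exact: avg_ge0.
Qed.

Lemma killn_notin U n x y : ~ U x -> killn om U n x y = 0 :> R.
Proof. by case: n => [|n] /= Ux; case: asboolP => // -[]. Qed.

Lemma sum_killn_le1 U n x (s : seq (pt d)) : uniq s ->
  \sum_(w <- s) killn om U n x w <= 1 :> R.
Proof.
move=> s_uniq; elim: n x => [|n IH] x /=.
  apply: (@le_trans _ _ (\sum_(w <- s) ((w == x)%:R : R))).
    apply: ler_sum => w _; case: asboolP => [[_ ->]|_]; first by rewrite eqxx.
    by case: (w == x).
  rewrite -natr_sum (_ : (\sum_(w <- s) (w == x : nat))%N = count_mem x s).
    by rewrite -[1]/(1%:R) ler_nat count_uniq_mem //; case: (x \in s).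
  by elim: (s) => [|a s' IHs]; rewrite ?big_nil ?big_cons //= IHs.
case: asboolP => _; last by rewrite big1.
rewrite -(avg_sum s (fun w z => killn om U n z w)).
by apply: avg_le1 => z _; exact: IH.
Qed.

Lemma killn_le1 U n x y : killn om U n x y <= 1 :> R.
Proof. by have := @sum_killn_le1 U n x [:: y] erefl; rewrite big_seq1. Qed.

Lemma nbrs_sym x y : y \in nbrs x -> x \in nbrs y.
Proof.
move=> /allpairsP [[i s] /= [iin sin ->]].
apply/allpairsP; exists (i, - s) => /=; split => //.
  by move: sin; rewrite !inE => /orP[] /eqP ->; rewrite ?opprK eqxx ?orbT.
by rewrite scaleNr addrK.
Qed.

Lemma sum_killn_U0_le_hitn_bdry U U0 (s : seq (pt d)) n y : uniq s ->
  (forall w, w \in s -> U0 w) -> U1 om U0 y ->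
  \sum_(w <- s) killn om U n y w <= hitn om U (bdry om U0) n y :> R.
Proof.
move=> s_uniq sU0; elim: n y => [|n IH] y U1y.
  rewrite big1_seq ?hitn_ge0 // => w /sU0 U0w /=.
  by case: asboolP => // -[_ yw]; case: U1y; rewrite yw.
have := @sum_killn_le1 U n.+1 y s s_uniq.
rewrite /=; case: asboolP => Uy sum_le1; last by rewrite big1.
case: asboolP => bdry_y //.
rewrite -(avg_sum s (fun w z => killn om U n z w)); apply: ler_avg => z zy Sz.
have [U0z|nU0z] := pselect (U0 z); last exact: IH.
by case: bdry_y; split => //; exists z.
Qed.

Lemma sum_killn_U1_le_hitn_bdry U U0 (s : seq (pt d)) n y : uniq s ->
  (forall w, w \in s -> U1 om U0 w) -> U0 y ->
  \sum_(w <- s) killn om U n y w <= hitn om U (bdry om U0) n y :> R.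
Proof.
move=> s_uniq sU1; elim: n y => [|n IH] y U0y.
  rewrite big1_seq ?hitn_ge0 // => w /sU1 [_ nU0w] /=.
  by case: asboolP => // -[_ yw]; case: nU0w; rewrite -yw.
rewrite /=; case: asboolP => Uy; last by rewrite big1.
rewrite asboolF; last by case=> -[].
rewrite -(avg_sum s (fun w z => killn om U n z w)); apply: ler_avg => z zy Sz.
have [U0z|nU0z] := pselect (U0 z); first exact: IH.
have [Uz|nUz] := pselect (U z); last by rewrite big1 ?hitn_ge0 // => w _; rewrite killn_notin.
rewrite hitn_target //; first exact: sum_killn_le1.
by split => //; exists y => //; exact: nbrs_sym.
Qed.

Definition far_side U0 y : set (pt d) := if `[< U0 y >] then U1 om U0 else U0.

Lemma sum_killn_far_side_le_hitn_bdry U U0 (s : seq (pt d)) n y : Sinf om y -> uniq s ->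
  (forall w, w \in s -> far_side U0 y w) ->
  \sum_(w <- s) killn om U n y w <= hitn om U (bdry om U0) n y :> R.
Proof.
rewrite /far_side; case: asboolP => [U0y|nU0y] Sy s_uniq s_far.
  exact: sum_killn_U1_le_hitn_bdry.
exact: sum_killn_U0_le_hitn_bdry.
Qed.

Lemma hitn_compose U U' B Sig (c : R) m n y : U' `<=` U -> 0 <= c -> c <= 1 ->
  (forall x, U' x -> B x -> c <= hitn om U Sig m x) ->
  c * hitn om U' B n y <= hitn om U Sig (n + m) y.
Proof.
move=> sU'U c_ge0 c_le1 c_le; elim: n y => [|n IH] y; rewrite [hitn om U' B _ y]/=.
  case: asboolP => [[U'y By]|_]; last by rewrite mulr0 hitn_ge0.
  by rewrite mulr1; exact: c_le.
case: asboolP => U'y; last by rewrite mulr0 hitn_ge0.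
case: asboolP => By.
  by rewrite mulr1; exact: le_trans (c_le _ U'y By) (le_hitn _ _ _ _ _ (leq_addl _ _)).
rewrite addSn [hitn om U Sig _ y]/= (asboolT (sU'U _ U'y)); case: asboolP => Sy.
  apply: le_trans c_le1; rewrite -[leRHS]mulr1 ler_wpM2l ?avg_le1 // => z _; exact: hitn_le1.
by rewrite -avgZ; apply: ler_avg => z _ _; exact: IH.
Qed.

Lemma hitn_le_hitprob U Sig n x : hitn om U Sig n x <= (hitprob om U Sig x : R).
Proof. by apply: ub_le_sup; [exists 1 => _ [k _ <-]; exact: hitn_le1 | exists n]. Qed.

Lemma hitprob_adherent U Sig x (c : R) : c < hitprob om U Sig x ->
  exists n, c < hitn om U Sig n x.
Proof.
move=> c_lt; have hs : has_sup [set (hitn om U Sig n x : R) | n in [set: nat]].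
  split; first by exists (hitn om U Sig 0 x), 0%N.
  by exists 1 => _ [k _ <-]; exact: hitn_le1.
have gap : 0 < hitprob om U Sig x - c by rewrite subr_gt0.
have [_ [n _ <-]] := sup_adherent gap hs.
by rewrite opprB addrCA subrr addr0 => ?; exists n.
Qed.

Lemma le_hitprobU U U' Sig x : U `<=` U' ->
  hitprob om U Sig x <= (hitprob om U' Sig x : R).
Proof.
move=> sUU'; apply: ge_sup; first by exists (hitn om U Sig 0 x), 0%N.
by move=> _ [n _ <-]; apply: le_trans (le_hitnU _ _ _ _ _ sUU') (hitn_le_hitprob _ _ n _).
Qed.

(* Strong Markov property at the hitting time of B; finiteness of U' `&` B yields a
   single number of steps after which every point of U' `&` B has hit Sig with
   probability above c. *)
Lemma hitprob_ge_hitn U U' B Sig (c : R) n y : U' `<=` U -> finite_set (U' `&` B) ->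
  0 <= c -> c <= 1 -> (forall x, U' x -> B x -> c < hitprob om U Sig x) ->
  c * hitn om U' B n y <= hitprob om U Sig y.
Proof.
move=> sU'U finU'B c_ge0 c_le1 c_lt.
have /choice [mx mxP] : forall x, exists m, (U' `&` B) x -> c < hitn om U Sig m x.
  move=> x; have [[U'x Bx]|nUBx] := pselect ((U' `&` B) x); last by exists 0%N => /nUBx.
  by have [m] := hitprob_adherent _ _ _ _ (c_lt x U'x Bx); exists m.
pose m := (\max_(x <- fset_set (U' `&` B)) mx x)%N.
have c_le x : U' x -> B x -> c <= hitn om U Sig m x.
  move=> U'x Bx; apply/ltW/(lt_le_trans (mxP x (conj U'x Bx)))/le_hitn.
  by apply: leq_bigmax_seq => //; rewrite in_fset_set //; exact/mem_set.
by apply: le_trans (hitn_le_hitprob _ _ (n + m) _); exact: hitn_compose.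
Qed.

End Walk.

Section Poisson.
Context {R : realType}.

Definition pois (t : R) (n : nat) : R := expR (- t) * t ^+ n / (n`!)%:R.

Lemma pois_ge0 t n : 0 <= t -> 0 <= pois t n.
Proof. by move=> t_ge0; rewrite /pois divr_ge0 // mulr_ge0 ?expR_ge0 ?exprn_ge0. Qed.

Lemma sum_pois_le1 t N : 0 <= t -> \sum_(0 <= n < N) pois t n <= 1.
Proof.
move=> t_ge0; have exp_nd : nondecreasing_seq (series (exp_coeff t)).
  apply/nondecreasing_seqP => n; rewrite /series /= big_nat_recr //= lerDl.
  by rewrite /exp_coeff /= divr_ge0 // exprn_ge0.
have := nondecreasing_cvgn_le exp_nd (is_cvg_series_exp_coeff t) N.
rewrite -/(expR t) /series /= => partial_le.
rewrite /pois; under eq_bigr do rewrite -mulrA.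
rewrite -mulr_sumr expRN ler_pdivrMl ?expR_gt0 // mulr1.
by apply: le_trans partial_le; apply: ler_sum => n _; rewrite /exp_coeff.
Qed.

Lemma sum_qkill_le {d : nat} (om : config d) U (t H : R) y (W : seq (pt d)) :
  0 <= t -> uniq W -> (forall n, \sum_(w <- W) killn om U n y w <= H) ->
  \sum_(w <- W) qkill om U t y w <= H.
Proof.
move=> t_ge0 W_uniq kill_le.
have H_ge0 : 0 <= H.
  by apply: le_trans (kill_le 0%N); apply: sumr_ge0 => w _; exact: killn_ge0.
pose u w := series (fun n => pois t n * killn om U n y w).
have u_cvg w : cvgn (u w).
  apply: nondecreasing_is_cvgn.
    apply/nondecreasing_seqP => n; rewrite /u /series /= big_nat_recr //= lerDl.
    by rewrite mulr_ge0 ?pois_ge0 ?killn_ge0.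
  exists 1 => _ [N _ <-]; apply: le_trans (sum_pois_le1 _ N t_ge0); apply: ler_sum => n _.
  by rewrite ler_piMr ?pois_ge0 ?killn_le1.
have sum_u_cvg : (fun N => \sum_(w <- W) u w N) @ \oo --> \sum_(w <- W) qkill om U t y w.
  exact: (cvg_big add_continuous _ (fun w _ => u_cvg w)).
rewrite -(cvg_lim _ sum_u_cvg) //; apply: limr_le; first exact: cvgP sum_u_cvg.
apply: nearW => N; rewrite /u /series /= exchange_big /=.
apply: le_trans (_ : \sum_(0 <= n < N) pois t n * H <= H).
  by apply: ler_sum => n _; rewrite -mulr_sumr ler_wpM2l ?pois_ge0.
by rewrite -mulr_suml ler_piMl ?sum_pois_le1.
Qed.

End Poisson.

Section Lattice.
Context {R : realType} {d : nat}.
Implicit Types (x y z v : pt d) (A C : set (pt d)).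

Lemma coord_le_linf v i : (`|v ord0 i|)%:~R <= (linf v : R).
Proof. exact: le_bigmax. Qed.

Lemma linf_ge0 v : 0 <= (linf v : R).
Proof. by have /bigmax_leP [] := lexx (linf v : R). Qed.

Lemma linf_le v (r : R) : 0 <= r -> (forall i, (`|v ord0 i|)%:~R <= r) -> linf v <= r.
Proof. by move=> r_ge0 coord_le; apply/bigmax_leP. Qed.

Lemma ler_linfD x y : linf (x + y) <= (linf x + linf y : R).
Proof.
apply: linf_le => [|i]; first by rewrite addr_ge0 ?linf_ge0.
rewrite mxE; apply: le_trans (lerD (coord_le_linf x i) (coord_le_linf y i)).
by rewrite -intrD ler_int ler_normD.
Qed.

Lemma ler_linf_distD z x y : linf (x - y) <= (linf (x - z) + linf (z - y) : R).
Proof. have -> : x - y = (x - z) + (z - y) by rewrite addrA subrK. exact: ler_linfD. Qed.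

Lemma linf_le_l2 v : linf v <= (l2 v : R).
Proof.
apply: linf_le => [|i]; first exact: sqrtr_ge0.
rewrite intr_norm -sqrtr_sqr /l2 ler_sqrt; last by apply: sumr_ge0 => j _; rewrite ler0z sqr_ge0.
rewrite (bigD1 i) //= -rmorphXn /= lerDl.
by apply: sumr_ge0 => j _; rewrite ler0z sqr_ge0.
Qed.

Definition box_pt x (k n : nat) (g : {ffun 'I_d -> 'I_n}) : pt d :=
  x + \row_i ((g i : nat)%:Z - k%:Z).

Lemma finite_ball_inf x (r : R) : finite_set (ball_inf x r).
Proof.
have [k r_le_k] : exists k : nat, r <= k%:R.
  exists (Num.truncn `|r|).+1; apply: le_trans (ler_norm r) _.
  by apply: ltW; rewrite truncnS_gt.
apply: (@sub_finite_set _ _ (box_pt x k (k.*2).+1 @` setT)); last first.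
  by apply: finite_image; exact: finite_finset.
move=> z zx; have : `|(z - x) ord0 _| <= k%:Z.
  by move=> i; rewrite -(ler_int R); apply: le_trans (coord_le_linf _ i) (le_trans zx r_le_k).
pose g := [ffun i : 'I_d => (inord (absz ((z - x) ord0 i + k%:Z)) : 'I_(k.*2).+1)].
move=> coord_le; exists g => //; apply/matrixP => a i; rewrite (ord1 a) /box_pt !mxE /g ffunE.
have /ler_normlP := coord_le i; rewrite mxE => -[lo hi].
rewrite inordK; last by rewrite ltnS; lia.
by rewrite gez0_abs ?addrK; [rewrite mxE addrC subrK | lia].
Qed.

Lemma card_ball_inf_ge x (r : R) : 0 <= r -> r ^+ d <= Defs.card (ball_inf x r).
Proof.
move=> r_ge0; have /andP[k_le_r r_lt_kS] := truncn_itv r_ge0.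
set k := Num.truncn r in k_le_r r_lt_kS.
apply: (@le_trans _ _ ((k.+1 ^ d)%N%:R)).
  by rewrite natrX; apply: lerXn2r; rewrite ?nnegrE ?ler0n //; exact: ltW.
rewrite /Defs.card ler_nat.
have <- : size (map (box_pt x 0 k.+1) (enum {ffun 'I_d -> 'I_k.+1})) = (k.+1 ^ d)%N.
  by rewrite size_map -cardE card_ffun !card_ord.
apply: uniq_leq_size.
  rewrite map_inj_uniq ?enum_uniq // => g g' /addrI /matrixP box_eq.
  apply/ffunP => i; have := box_eq ord0 i; rewrite !mxE !subr0 => /eqP.
  by rewrite eqz_nat => /eqP /val_inj.
move=> _ /mapP [g _ ->]; rewrite in_fset_set; last exact: finite_ball_inf.
apply/mem_set; rewrite /ball_inf /= /box_pt addrAC subrr add0r; apply: linf_le => // i.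
rewrite mxE subr0; apply: le_trans k_le_r; rewrite -[k%:R]/((k%:Z)%:~R) ler_int.
by rewrite ger0_norm // lez_nat -ltnS.
Qed.

Lemma card_setID A C : finite_set A ->
  Defs.card A = Defs.card (A `&` C) + Defs.card (A `\` C) :> R.
Proof.
move=> finA; have finAC : finite_set (A `&` C) by exact: finite_setIl.
have -> : A `\` C = A `\` (A `&` C).
  apply/seteqP; split => z /= [Az nCz]; split => //; first by case.
  by move=> Cz; apply: nCz.
have AAC : A `&` C = A `&` (A `&` C) by rewrite setIA setIid.
by rewrite /Defs.card [in X in _ = X + _]AAC fset_setI // fset_setD // -natrD cardfsID.
Qed.

End Lattice.

Section Interface.
Context {R : realType} {d : nat} (om : config d).

Lemma card_far_side_ge U0 (B : set (pt d)) y (a : R) : finite_set B ->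
  0 < Defs.card (B `&` Sinf om) :> R ->
  a <= Defs.card (B `&` U1 om U0) / Defs.card (B `&` Sinf om) <= 1 - a ->
  a * Defs.card (B `&` Sinf om) <= Defs.card (B `&` Sinf om `&` far_side om U0 y).
Proof.
move=> finB cardBS_gt0; rewrite ler_pdivlMr // ler_pdivrMr // => /andP[lo hi].
have U1_Sinf : U1 om U0 `<=` Sinf om by move=> z [].
rewrite /far_side; case: asboolP => _; first by rewrite -setIA (setIidr U1_Sinf).
have := @card_setID R d _ U0 (finite_setIl (Sinf om) finB).
have -> : (B `&` Sinf om) `\` U0 = B `&` U1 om U0 by rewrite /U1 !setDE setIA.
lra.
Qed.

Lemma card_far_side_ball_ge U0 (x0 y : pt d) (r alpha rho : R) :
  0 < r -> 0 <= alpha -> 0 < rho ->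
  alpha <= Defs.card (ball_inf x0 r `&` U1 om U0) / Defs.card (ball_inf x0 r `&` Sinf om)
    <= 1 - alpha ->
  rho <= Defs.card (Sinf om `&` ball_inf x0 r) / Defs.card (ball_inf x0 r) ->
  alpha * (rho * r ^+ d) <= Defs.card (ball_inf x0 r `&` Sinf om `&` far_side om U0 y).
Proof.
move=> r_gt0 alpha_ge0 rho_gt0 sig_bd den.
have cardB := card_ball_inf_ge x0 _ (ltW r_gt0).
have cardBS : rho * r ^+ d <= Defs.card (ball_inf x0 r `&` Sinf om).
  move: den; rewrite setIC ler_pdivlMr; last by apply: lt_le_trans cardB; rewrite exprn_gt0.
  by apply: le_trans; rewrite ler_wpM2l // ltW.
have cardBS_gt0 : 0 < Defs.card (ball_inf x0 r `&` Sinf om) :> R.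
  by apply: lt_le_trans cardBS; rewrite mulr_gt0 // exprn_gt0.
apply: le_trans (card_far_side_ge U0 _ y _ (finite_ball_inf x0 r) cardBS_gt0 sig_bd).
exact: ler_wpM2l.
Qed.

(* Covers the junk value [q / deg om w = 0] when [w] has no neighbour in S_inf. *)
Lemma le_of_le_div_deg w (a q : R) : 0 < a -> a <= q / deg om w -> a <= q.
Proof.
move=> a_gt0; rewrite /deg; case: (count _ _) => [|n].
  by rewrite invr0 mulr0 => /(lt_le_trans a_gt0); rewrite ltxx.
rewrite ler_pdivlMr ?ltr0Sn // => /(le_trans _); apply.
by rewrite ler_peMr ?ler1n // ltW.
Qed.

Lemma hitprob_ge_far_mass U0 U Uk Sig (W : set (pt d)) y (t c a : R) :
  Sinf om y -> Uk `<=` U -> finite_set Uk -> 0 < c -> c <= 1 ->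
  (forall x, Uk x -> bdry om U0 x -> c < hitprob om U Sig x) ->
  0 <= t -> finite_set W -> W `<=` far_side om U0 y ->
  (forall w, W w -> a <= qkill om Uk t y w) ->
  c * (Defs.card W * a) <= hitprob om U Sig y.
Proof.
move=> Sy sUkU finUk c_gt0 c_le1 bdry_hit t_ge0 finW W_far a_le.
have Ws_W w : w \in fset_set W -> W w by rewrite in_fset_set // => /set_mem.
have kill_le n : \sum_(w <- fset_set W) killn om Uk n y w <= hitprob om U Sig y / c.
  rewrite ler_pdivlMr // mulrC.
  apply: le_trans (hitprob_ge_hitn om _ _ _ _ _ n y sUkU (finite_setIl _ finUk)
    (ltW c_gt0) c_le1 bdry_hit).
  apply: ler_wpM2l; first exact: ltW.
  apply: sum_killn_far_side_le_hitn_bdry => //.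
    exact: fset_uniq.
  by move=> w /Ws_W /W_far.
rewrite -ler_pdivlMl // [c^-1 * _]mulrC.
apply: le_trans (sum_qkill_le om _ _ _ _ _ t_ge0 (fset_uniq _) kill_le).
rewrite /Defs.card -sum1_size natr_sum mulr_suml !big_seq.
by apply: ler_sum => w wW; rewrite mul1r; exact: a_le (Ws_W w wW).
Qed.

End Interface.

Lemma powR_sqrN {R : realType} (x : R) (n : nat) : 0 < x ->
  powR (x ^+ 2) (- (n%:R / 2)) = (x ^+ n)^-1.
Proof.
move=> x_gt0; rewrite -(powR_mulrn 2 (ltW x_gt0)) -powRrM.
have -> : 2%:R * - (n%:R / 2) = - n%:R :> R.
  by rewrite mulrN mulrC -mulrA mulVf ?mulr1 // pnatr_eq0.
by rewrite powR_invn // ltW.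
Qed.

Lemma le_rscale {R : realType} (k D r1 r2 : R) : 0 < k -> 0 <= D -> 1 <= r1 -> r1 <= r2 ->
  rscale k D r1 <= rscale k D r2.
Proof.
move=> k_gt0 D_ge0 r1_ge1 r12; rewrite /rscale ler_expR ler_pM2l //.
have r1_gt0 : 0 < r1 by apply: lt_le_trans r1_ge1.
apply: ge0_ler_powR; rewrite ?nnegrE ?ln_ge0 ?addr_ge0 //; first exact: le_trans r12.
by rewrite ler_ln ?posrE //; exact: lt_le_trans r12.
Qed.

(* Rn = 9 * 2^(l-1) is chosen so that (1 - 1/9) Rn = 4 * 2^l, and an eps-step
   with eps <= 2^l / 4 from B(x0, Rn) stays inside B(x0, 5 * 2^l). *)
Lemma hitprob_ge_dyadic {R : realType} {d : nat} {om : config d} {U0 Sig : set (pt d)}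
    {x0 y : pt d} {l eps Rn : nat} {chi alpha rho c c' : R} :
  (0 < l)%N -> Rn = (9 * 2 ^ l.-1)%N ->
  0 < chi -> chi <= 1 -> 0 <= alpha -> 0 < rho -> 0 < c -> c' <= 1 ->
  (forall x, bdry om U0 x -> chi <= hitprob om [set z | linf (z - x) < eps%:R :> R] Sig x) ->
  eps%:R <= 4^-1 * 2 ^+ l :> R ->
  Sinf om y -> l2 (y - x0) <= 4^-1 * 2 ^+ l :> R ->
  alpha <= sigmat om U0 l x0 <= 1 - alpha ->
  rho <= Defs.card (Sinf om `&` ball_inf x0 (4 * 2 ^+ l : R))
           / Defs.card (ball_inf x0 (4 * 2 ^+ l : R)) ->
  (forall x w (t : R), Sinf om x -> ball_inf x0 ((1 - 1 / 9) * Rn%:R : R) x ->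
     Sinf om w -> ball_inf x0 ((1 - 1 / 9) * Rn%:R : R) w ->
     c' * Rn%:R ^+ 2 <= t <= Rn%:R ^+ 2 ->
     qkill om (ball_inf x0 (Rn%:R : R) `&` Sinf om) t x w / deg om w
       >= c * powR t (- (d%:R / 2))) ->
  chi / 2 * (alpha * rho * c * (8 / 9) ^+ d) <= hitprob om (ball_inf x0 (5 * 2 ^+ l : R)) Sig y.
Proof.
move=> l_gt0 eRn chi_gt0 chi_le1 alpha_ge0 rho_gt0 c_gt0 c'_le1 Sig_hit eps_le yS yx0 sig_bd
  den khk.
set L : R := 2 ^+ l.-1.
have L_ge1 : 1 <= L by rewrite exprn_ege1 // ler1n.
have L_gt0 : 0 < L by lra.
have E2 : 2 ^+ l = 2 * L :> R by rewrite -exprS prednK.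
have ERn : Rn%:R = 9 * L :> R by rewrite eRn natrM natrX.
move: khk eps_le yx0 sig_bd den; rewrite /sigmat ERn E2 => khk eps_le yx0 sig_bd den.
set B := ball_inf x0 (4 * (2 * L)).
set Uk := ball_inf x0 (9 * L) `&` Sinf om.
set W := B `&` Sinf om `&` far_side om U0 y.
have Uk_sub : Uk `<=` ball_inf x0 (5 * (2 * L)).
  by move=> z [zx0 _]; rewrite /ball_inf /= in zx0 *; lra.
have bdry_hit x : Uk x -> bdry om U0 x -> chi / 2 < hitprob om (ball_inf x0 (5 * (2 * L))) Sig x.
  move=> [xx0 _] bx.
  have eps_sub : [set z | linf (z - x) < eps%:R :> R] `<=` ball_inf x0 (5 * (2 * L)).
    move=> z /= zx; have := @ler_linf_distD R d x z x0; rewrite /ball_inf /= in xx0 *; lra.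
  have := le_trans (Sig_hit x bx) (le_hitprobU om _ _ _ x eps_sub); lra.
have kill_W w : W w -> c * ((9 * L) ^+ d)^-1 <= qkill om Uk ((9 * L) ^+ 2) y w.
  move=> [[Bw Sw] _]; apply: (le_of_le_div_deg om w).
    by rewrite mulr_gt0 ?invr_gt0 ?exprn_gt0 //; lra.
  rewrite -powR_sqrN; last lra.
  apply: khk => //; rewrite /ball_inf /=.
  - by apply: le_trans (linf_le_l2 _) _; lra.
  - by rewrite /B /ball_inf /= in Bw; lra.
  - by rewrite lexx andbT ler_piMl // sqr_ge0.
have card_W : alpha * (rho * (8 * L) ^+ d) <= Defs.card W.
  rewrite (_ : 8 * L = 4 * (2 * L)); last by ring.
  by apply: card_far_side_ball_ge => //; lra.
have [chi2_gt0 chi2_le1] : 0 < chi / 2 /\ chi / 2 <= 1 by split; lra.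
apply: le_trans (hitprob_ge_far_mass om _ _ _ _ _ _ _ _ _ yS Uk_sub
  (finite_setIl _ (finite_ball_inf _ _)) chi2_gt0 chi2_le1 bdry_hit (sqr_ge0 _)
  (finite_setIl _ (finite_setIl _ (finite_ball_inf _ _))) (@subIsetr _ _ _) kill_W).
apply: ler_wpM2l; first exact: ltW.
have -> : alpha * rho * c * (8 / 9) ^+ d
    = alpha * (rho * (8 * L) ^+ d) * (c * ((9 * L) ^+ d)^-1).
  have -> : 8 / 9 = 8 * L / (9 * L) :> R by rewrite -mulf_div divff ?mulr1 // gt_eqF.
  by rewrite expr_div_n; ring.
by rewrite ler_wpM2r // mulr_ge0 ?invr_ge0 ?exprn_ge0 //; lra.
Qed.

Lemma le_dyadic_radii {R : realType} (l : nat) : (0 < l)%N ->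
  [/\ l%:R <= 4 * 2 ^+ l :> R, (l <= 9 * 2 ^ l.-1)%N & 4 * 2 ^+ l <= (9 * 2 ^ l.-1)%N%:R :> R].
Proof.
move=> l_gt0; have l_lt_pow : (l < 2 ^ l)%N by rewrite ltn_expl.
have pow_ge0 : 0 <= 2 ^+ l.-1 :> R by rewrite exprn_ge0.
have pow_pred : 2 ^+ l = 2 * 2 ^+ l.-1 :> R by rewrite -exprS prednK.
split.
- by move: l_lt_pow; rewrite -(ltr_nat R) natrX => ?; lra.
- apply: leq_trans (ltnW l_lt_pow) _.
  by rewrite -[in (2 ^ l)%N](prednK l_gt0) expnS leq_mul2r; apply/orP; right.
- by rewrite natrM natrX; lra.
Qed.

Theorem lemma4p12 (R : realType) (d : nat) (hd : (3 <= d)%N)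
  (eta DeltaS kd2 chk6 chk1 chk2 chk3 chk4 ckhk1 ckhk2 : R)
  (heta : 0 < eta <= 1) (hDelta : 0 < DeltaS) (hkd2 : 0 < kd2) (hchk6 : 0 < chk6)
  (hchk1 : 0 < chk1) (hchk2 : 0 < chk2) (hchk3 : 0 < chk3) (hchk4 : 0 < chk4)
  (hckhk1 : 0 < ckhk1) (hckhk2 : 0 < ckhk2 <= 1)
  (A : set 'rV[R]_d) (hA : compact A) (b : nat -> R) (hb : forall N, 0 < b N) :
  let kreg : R := (2 * d%:R)^-1 * Num.min kd2 chk6 in
  exists c5 : R -> R, (forall chi, 0 < chi < 1 -> 0 < c5 chi) /\
  forall om : config d,
    Omega_reg eta DeltaS kreg chk1 chk2 chk3 chk4 ckhk1 ckhk2 (1 / 3) (1 / 9) om ->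
    exists c4 : R,
    forall (N lstar : nat) (U0 : set (pt d)) (eps : nat) (chi : R) (Sig : set (pt d))
           (l : nat) (x0 y : pt d),
      (1 <= N)%N ->
      UclassN om A b lstar N U0 ->
      0 < chi < 1 ->
      Sclass om U0 eps chi Sig ->
      c4 <= l%:R ->
      (eps%:R : R) <= 4^-1 * 2 ^+ l ->
      Sinf om x0 -> ball_inf (@origin d) (rscale kreg DeltaS (4 * 2 ^+ l)) x0 ->
      @alphat R d <= (sigmat om U0 l x0 : R) <= 1 - @alphat R d ->
      Sinf om y -> (l2 (y - x0) : R) <= 4^-1 * 2 ^+ l ->
      c5 chi <= (hitprob om (ball_inf x0 (5 * 2 ^+ l : R)) Sig y : R).
Proof.
move=> kreg.
have [eta_gt0 _] := andP heta.
have alphat_gt0 : 0 < @alphat R d by rewrite /alphat divr_gt0 ?exprn_gt0.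
pose a0 : R := @alphat R d * ((1 - 1 / 3) * eta) * ckhk1 * (8 / 9) ^+ d.
exists (fun chi => chi / 2 * a0); split => [chi /andP[chi_gt0 _]|].
  by rewrite !mulr_gt0 ?exprn_gt0 //; lra.
move=> om [_ _ [Rden den] _ [Rkhk khk]]; exists (Num.max Rden (Num.max Rkhk%:R 1)).
move=> N lstar U0 eps chi Sig l x0 y _ _ /andP[chi_gt0 chi_lt1] [_ _ Sig_hit].
rewrite !ge_max => /and3P[l_den l_khk l_ge1] eps_le x0S x0r sig_bd yS yx0.
have l_gt0 : (0 < l)%N by rewrite -(ltr_nat R); apply: lt_le_trans l_ge1.
have [l_le_4pow l_le_9pow pow_le] := @le_dyadic_radii R l l_gt0.
have Rkhk_le : (Rkhk <= 9 * 2 ^ l.-1)%N by rewrite ler_nat in l_khk; exact: leq_trans l_khk _.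
have d_gt0 : (0 < d)%N by apply: leq_trans hd.
have kreg_gt0 : 0 < kreg by rewrite mulr_gt0 ?invr_gt0 ?mulr_gt0 ?ltr0n // lt_min hkd2 hchk6.
have x0r' : ball_inf origin (rscale kreg DeltaS (9 * 2 ^ l.-1)%N%:R) x0.
  by apply: le_trans x0r (le_rscale _ _ _ _ kreg_gt0 (ltW hDelta) _ pow_le); lra.
have Rden_le : Rden <= 4 * 2 ^+ l by lra.
have /andP[den_lo _] := den _ Rden_le x0 x0S x0r.
have rho_gt0 : 0 < (1 - 1 / 3) * eta by rewrite mulr_gt0 //; lra.
have [_ ckhk2_le1] := andP hckhk2.
exact: (hitprob_ge_dyadic l_gt0 erefl chi_gt0 (ltW chi_lt1) (ltW alphat_gt0) rho_gt0 hckhk1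
  ckhk2_le1 Sig_hit eps_le yS yx0 sig_bd den_lo (fun x w t => khk _ Rkhk_le x0 x w t x0S x0r')).
Qed.
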